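(* Let $q\ge 2$ and let $f$ be a $q$-regular sequence with a zero-insensitive linear representation $(\mathbf{u},(M_i)_{0\le i<q},\mathbf{v})$, so that $f(n)=\mathbf{u}^t M_{n_0}M_{n_1}\cdots M_{n_L}\mathbf{v}$ where $n_L\cdots n_0$ is the $q$-ary expansion of $n$. Let $U$ be the smallest vector space such that every vector of the form $\mathbf{u}^t\prod_{i\in I}M_{n_i}$ (for a finite index set $I$ and digits $n_i\in\{0,\dots,q-1\}$) lies in the affine subspace $\mathbf{u}^t+U^t$, where $U^t=\{\mathbf{x}^t:\mathbf{x}\in U\}$; let $V$ be the smallest vector space such that every vector of the form $\prod_{j\in J}M_{n_j}\mathbf{v}$ lies in $\mathbf{v}+V$. Let $r$ be a nonnegative integer. Then $f$ is $q$-quasiadditive with parameter $r$ (i.e. $f(q^{k+r}a+b)=f(a)+f(b)$ for all nonnegative integers $a,b,k$ with $0\le b<q^k$) if and only if all of the following hold: (1) $\mathbf{u}^t\mathbf{v}=0$; (2) $\mathbf{x}^t(M_0^r-I)\mathbf{v}=0$ for all $\mathbf{x}\in U$; (3) $\mathbf{u}^t(M_0^r-I)\mathbf{y}=0$ for all $\mathbf{y}\in V$; (4) $\mathbf{x}^tM_0^r\mathbf{y}=0$ for all $\mathbf{x}\in U$ and $\mathbf{y}\in V$.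
   Context: A function $f$ on the nonnegative integers is $q$-regular if $f(n)=\mathbf{u}^t\mathbf{f}(n)$ for a vector $\mathbf{u}$ and a vector-valued function $\mathbf{f}$ for which there are square matrices $M_0,\dots,M_{q-1}$ with $\mathbf{f}(qn+i)=M_i\mathbf{f}(n)$ for all $0\le i<q$ and $qn+i>0$; set $\mathbf{v}=\mathbf{f}(0)$. Equivalently $f(n)=\mathbf{u}^t M_{n_0}M_{n_1}\cdots M_{n_L}\mathbf{v}$ for the $q$-ary expansion $n_L\cdots n_0$ of $n$. The triple $(\mathbf{u},(M_i)_{0\le i<q},\mathbf{v})$ is a linear representation of $f$; it is zero-insensitive if $M_0\mathbf{v}=\mathbf{v}$. $I$ denotes the identity matrix. *)

From HB Require Import structures.
From mathcomp Require Import all_boot all_order all_algebra.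
Set Implicit Arguments. Unset Strict Implicit. Unset Printing Implicit Defensive.
Import Order.TTheory GRing.Theory Num.Theory.
Local Open Scope ring_scope.

(* q-ary digits of n, least significant first: [:: n_0; n_1; ...; n_L];
   the expansion of 0 is empty.  Fuel n suffices when q >= 2. *)
Fixpoint digits_fuel (q fuel n : nat) : seq nat :=
  match fuel with
  | 0 => [::]
  | fuel'.+1 => if n == 0%N then [::] else (n %% q)%N :: digits_fuel q fuel' (n %/ q)
  end.
Definition digits (q n : nat) : seq nat := digits_fuel q n n.

Definition wprod (K : fieldType) (d : nat) (M : nat -> 'M[K]_d) (w : seq nat) : 'M[K]_d :=
  foldr (fun i A => M i *m A) 1%:M w.

Definition qword (q : nat) (w : seq nat) : bool := all (fun i => (i < q)%N) w.

(* x^t in U^t, U the smallest subspace with u^t W in u^t + U^t for all words W: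
   x lies in every subspace (row space of a d x d matrix) containing all
   u^t W - u^t. *)
Definition inU (K : fieldType) (d q : nat) (M : nat -> 'M[K]_d) (u : 'rV[K]_d)
  (x : 'rV[K]_d) : Prop :=
  forall S : 'M[K]_d,
    (forall w, qword q w -> (u *m wprod M w - u <= S)%MS) -> (x <= S)%MS.

Definition inV (K : fieldType) (d q : nat) (M : nat -> 'M[K]_d) (v : 'cV[K]_d)
  (y : 'cV[K]_d) : Prop :=
  forall S : 'M[K]_d,
    (forall w, qword q w -> ((wprod M w *m v - v)^T <= S)%MS) -> (y^T <= S)%MS.

Definition quasiadditive (K : fieldType) (q r : nat) (f : nat -> K) : Prop :=
  forall a b k : nat, (b < q ^ k)%N -> f (q ^ (k + r) * a + b)%N = f a + f b.

(* Reading a word of digits from least to most significant, a sum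
   q^(k+r) a + b with b < q^k is the number whose digit word is
   (k digits of b) ++ 0^r ++ (digits of a); since M_0 fixes v, leading zeros
   and the exact length of the expansion do not matter.  Hence f is
   quasiadditive iff u^t v = 0 and u^t W1 M_0^r W2 v = u^t W1 v + u^t W2 v for
   all digit words W1, W2.  Writing u^t W1 = u^t + x^t and W2 v = v + y, the
   defect of this identity is u^t (M_0^r - I) y + x^t M_0^r y, and x, y range
   exactly over the generators of U and V; condition (2) holds trivially
   because M_0^r v = v. *)
From HB Require Import structures.
From mathcomp Require Import all_boot all_order all_algebra.
From mathcomp Require Import zify.
Set Implicit Arguments. Unset Strict Implicit.
Import Order.TTheory GRing.Theory Num.Theory.
Local Open Scope ring_scope.

Fixpoint nat_of_digits (q : nat) (w : seq nat) : nat :=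
  if w is i :: w' then (i + q * nat_of_digits q w')%N else 0%N.

Fixpoint kdigits (q k b : nat) : seq nat :=
  if k is k'.+1 then (b %% q)%N :: kdigits q k' (b %/ q) else [::].

Lemma nat_of_digits_cat q w1 w2 :
  nat_of_digits q (w1 ++ w2) =
  (nat_of_digits q w1 + q ^ size w1 * nat_of_digits q w2)%N.
Proof.
elim: w1 => [|i w1 IH] /=; first by rewrite expn0 mul1n.
by rewrite IH expnS mulnDr mulnA addnA.
Qed.

Lemma nat_of_digits_nseq0 q r : nat_of_digits q (nseq r 0%N) = 0%N.
Proof. by elim: r => //= r ->; rewrite muln0. Qed.

Lemma nat_of_digits_lt q w : qword q w -> (nat_of_digits q w < q ^ size w)%N.
Proof.
elim: w => [|i w IH] /=; first by rewrite expn0.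
case/andP=> lt_iq /IH; rewrite expnS; move: (q ^ size w)%N => p; nia.
Qed.

Lemma size_kdigits q k b : size (kdigits q k b) = k.
Proof. by elim: k b => //= k IH b; rewrite IH. Qed.

Lemma qword_kdigits q k b : (0 < q)%N -> qword q (kdigits q k b).
Proof. by move=> q_gt0; elim: k b => //= k IH b; rewrite ltn_pmod // IH. Qed.

Lemma kdigitsK q k b : (0 < q)%N -> (b < q ^ k)%N ->
  nat_of_digits q (kdigits q k b) = b.
Proof.
move=> q_gt0; elim: k b => [|k IH] b /=; first by rewrite expn0; case: b.
move=> lt_b; rewrite IH; last by rewrite ltn_divLR // -expnSr.
by rewrite mulnC addnC -divn_eq.
Qed.

Lemma qword_pad q r w1 w2 : (0 < q)%N -> qword q w1 -> qword q w2 ->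
  qword q (w1 ++ nseq r 0%N ++ w2).
Proof.
move=> q_gt0 qw1 qw2; rewrite /qword !all_cat; apply/and3P; split=> //.
by apply/allP => i /nseqP [->].
Qed.

Lemma nat_of_digits_pad q r w1 w2 :
  nat_of_digits q (w1 ++ nseq r 0%N ++ w2) =
  (q ^ (size w1 + r) * nat_of_digits q w2 + nat_of_digits q w1)%N.
Proof.
by rewrite !nat_of_digits_cat nat_of_digits_nseq0 size_nseq expnD mulnA addnC.
Qed.

Lemma digits_fuel_enough q fuel1 fuel2 n : (2 <= q)%N ->
  (n <= fuel1)%N -> (n <= fuel2)%N ->
  digits_fuel q fuel1 n = digits_fuel q fuel2 n.
Proof.
move=> q_ge2; elim: fuel1 fuel2 n => [|f1 IH] [|f2] n le_n1 le_n2 //=;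
  case: eqP => // /eqP n_neq0; try lia.
have : (n %/ q < n)%N by apply: ltn_Pdiv; lia.
by move=> lt_div; congr (_ :: _); apply: IH; lia.
Qed.

Lemma digits_rec q n : (2 <= q)%N -> (0 < n)%N ->
  digits q n = (n %% q)%N :: digits q (n %/ q).
Proof.
move=> q_ge2; rewrite /digits; case: n => // n _ /=.
congr (_ :: _); apply: digits_fuel_enough => //.
have : (n.+1 %/ q < n.+1)%N by apply: ltn_Pdiv; lia.
lia.
Qed.

Section WordProducts.
Variables (K : fieldType) (d : nat) (M : nat -> 'M[K]_d).

Lemma wprod_cons i w : wprod M (i :: w) = M i *m wprod M w.
Proof. by []. Qed.

Lemma wprod_cat w1 w2 : wprod M (w1 ++ w2) = wprod M w1 *m wprod M w2.
Proof.
by elim: w1 => [|i w1 IH]; rewrite ?mul1mx // cat_cons !wprod_cons IH mulmxA.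
Qed.

Lemma wprod_nseq0 n : wprod M (nseq n 0%N) = M 0%N ^+ n.
Proof.
by elim: n => [|n IH]; rewrite ?expr0 // wprod_cons IH exprS mulmxE.
Qed.

End WordProducts.

Section ZeroInsensitive.
Variables (K : fieldType) (d : nat) (M : nat -> 'M[K]_d) (v : 'cV[K]_d) (q : nat).
Hypothesis M0v : M 0%N *m v = v.

Lemma exprM0_fix n : M 0%N ^+ n *m v = v.
Proof.
elim: n => [|n IH]; first by rewrite expr0 mul1mx.
by rewrite exprS -mulmxE -mulmxA IH M0v.
Qed.

Lemma wprod_digits_nat_of_digits w : (2 <= q)%N -> qword q w ->
  wprod M (digits q (nat_of_digits q w)) *m v = wprod M w *m v.
Proof.
move=> q_ge2; elim: w => [|i w IH] // /andP [lt_iq qw].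
rewrite [nat_of_digits _ _]/= wprod_cons -mulmxA -IH //.
have [n_eq0|n_gt0] := posnP (i + q * nat_of_digits q w).
  have [-> ->] : i = 0%N /\ nat_of_digits q w = 0%N by nia.
  by rewrite muln0 /= mul1mx M0v.
rewrite digits_rec // wprod_cons -mulmxA.
rewrite addnC mulnC modnMDl divnMDl; last lia.
by rewrite modn_small // divn_small // addn0.
Qed.

End ZeroInsensitive.

Section Bilinear.
Variables (K : fieldType) (d : nat) (P : 'M[K]_d) (v : 'cV[K]_d).
Hypothesis Pv : P *m v = v.

(* The defect of the quasiadditivity identity for u^t W1 =: a and W2 v =: b. *)
Lemma bilinear_defect (u a : 'rV[K]_d) (b : 'cV[K]_d) :
  a *m P *m b - (a *m v + u *m b) =
  u *m (P - 1%:M) *m (b - v) + (a - u) *m P *m (b - v) - u *m v.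
Proof.
rewrite !(mulmxBl, mulmxBr) !mulmx1 -!mulmxA Pv.
rewrite subrr subr0 opprB addrA (addrC (_ - u *m b)) -(addrA (_ - u *m (P *m b))).
rewrite -(addrA (u *m (P *m b))) subrKA (addrCA (- _)) (addrCA (a *m _)).
by rewrite (addrC (u *m v)) addrK opprD addrC (addrC (- _)) [RHS]addrC.
Qed.

Lemma bilinear_defect_eq0 (u a : 'rV[K]_d) (b : 'cV[K]_d) :
  u *m v = 0 ->
  (a *m P *m b == a *m v + u *m b) =
  (u *m (P - 1%:M) *m (b - v) + (a - u) *m P *m (b - v) == 0).
Proof. by move=> uv0; rewrite -subr_eq0 bilinear_defect // uv0 subr0. Qed.

End Bilinear.

Section Closure.
Variables (K : fieldType) (d q : nat) (M : nat -> 'M[K]_d).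

Lemma inU_generator u w : qword q w -> inU q M u (u *m wprod M w - u).
Proof. by move=> qw S; apply. Qed.

Lemma inV_generator v w : qword q w -> inV q M v (wprod M w *m v - v).
Proof. by move=> qw S; apply. Qed.

Lemma inU_annihilated u (c : 'cV[K]_d) x :
  (forall w, qword q w -> (u *m wprod M w - u) *m c = 0) ->
  inU q M u x -> x *m c = 0.
Proof.
move=> gen_c /(_ (kermx c)) x_ker.
by apply/sub_kermxP/x_ker => w qw; apply/sub_kermxP/gen_c.
Qed.

Lemma inV_annihilated v (c : 'rV[K]_d) y :
  (forall w, qword q w -> c *m (wprod M w *m v - v) = 0) ->
  inV q M v y -> c *m y = 0.
Proof.
move=> gen_c /(_ (kermx c^T)) y_ker.
have /sub_kermxP : (y^T <= kermx c^T)%MS.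
  by apply: y_ker => w qw; apply/sub_kermxP; rewrite -trmx_mul gen_c ?trmx0.
by rewrite -trmx_mul => /eqP; rewrite trmx_eq0 => /eqP.
Qed.

End Closure.

Lemma mx11_eq (K : fieldType) (A B : 'M[K]_1) : A 0 0 = B 0 0 -> A = B.
Proof. by move=> eq00; apply/matrixP => i j; rewrite !ord1. Qed.

Section Quasiadditivity.
Variables (K : fieldType) (q d r : nat) (u : 'rV[K]_d).
Variables (M : nat -> 'M[K]_d) (v : 'cV[K]_d) (f : nat -> K).
Hypotheses (q_ge2 : (2 <= q)%N) (M0v : M 0%N *m v = v).
Hypothesis f_def : forall n, f n = (u *m wprod M (digits q n) *m v) 0 0.

Let P := M 0%N ^+ r.

Lemma f_nat_of_digits w : qword q w ->
  f (nat_of_digits q w) = (u *m wprod M w *m v) 0 0.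
Proof. by move=> qw; rewrite f_def -!mulmxA wprod_digits_nat_of_digits. Qed.

Lemma f_pad w1 w2 : qword q w1 -> qword q w2 ->
  f (nat_of_digits q (w1 ++ nseq r 0%N ++ w2)) =
  (u *m wprod M w1 *m P *m wprod M w2 *m v) 0 0.
Proof.
move=> qw1 qw2; rewrite f_nat_of_digits ?qword_pad ?(ltnW q_ge2) //.
by rewrite !wprod_cat wprod_nseq0 !mulmxA.
Qed.

Definition word_additive := forall w1 w2, qword q w1 -> qword q w2 ->
  u *m wprod M w1 *m P *m wprod M w2 *m v =
  u *m wprod M w1 *m v + u *m wprod M w2 *m v.

Lemma quasiadditiveP : quasiadditive q r f <-> u *m v = 0 /\ word_additive.
Proof.
have q_gt0 : (0 < q)%N by lia.
split=> [qa | [uv0 wadd] a b k lt_b].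
  split.
    have := qa 0%N 0%N 0%N isT; rewrite muln0 addn0 => f0.
    have {f0} : f 0%N = 0 by apply: (@addrI _ (f 0%N)); rewrite addr0 -f0.
    by rewrite f_def mulmx1 => uv00; apply: mx11_eq; rewrite uv00 mxE.
  move=> w1 w2 qw1 qw2; apply: mx11_eq.
  have := qa (nat_of_digits q w2) _ _ (nat_of_digits_lt qw1).
  by rewrite -nat_of_digits_pad f_pad // => ->; rewrite [RHS]mxE -!f_nat_of_digits // addrC.
set wb := kdigits q k b; set wa := kdigits q a a.
have qwb : qword q wb by apply: qword_kdigits.
have qwa : qword q wa by apply: qword_kdigits.
have lt_a : (a < q ^ a)%N by apply: ltn_expl; lia.
have -> : (q ^ (k + r) * a + b = nat_of_digits q (wb ++ nseq r 0%N ++ wa))%N.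
  by rewrite nat_of_digits_pad size_kdigits !kdigitsK.
rewrite f_pad // wadd // mxE addrC.
by rewrite -(f_nat_of_digits qwa) -(f_nat_of_digits qwb) !kdigitsK.
Qed.

Lemma word_additiveP : u *m v = 0 ->
  word_additive <->
  forall w1 w2, qword q w1 -> qword q w2 ->
  u *m (P - 1%:M) *m (wprod M w2 *m v - v) +
  (u *m wprod M w1 - u) *m P *m (wprod M w2 *m v - v) = 0.
Proof.
move=> uv0; have Pv : P *m v = v by apply: exprM0_fix.
split=> wadd w1 w2 qw1 qw2; apply/eqP.
  by rewrite -bilinear_defect_eq0 // !mulmxA wadd.
by rewrite -!(mulmxA _ (wprod M w2)) bilinear_defect_eq0 // wadd.
Qed.

End Quasiadditivity.

Theorem theorem9 (K : fieldType) (q d r : nat) (u : 'rV[K]_d)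
  (M : nat -> 'M[K]_d) (v : 'cV[K]_d) (f : nat -> K) :
  (2 <= q)%N ->
  M 0%N *m v = v ->
  (forall n : nat, f n = (u *m wprod M (digits q n) *m v) 0 0) ->
  quasiadditive q r f <->
  [/\ u *m v = 0,
      (forall x, inU q M u x -> x *m (M 0%N ^+ r - 1%:M) *m v = 0),
      (forall y, inV q M v y -> u *m (M 0%N ^+ r - 1%:M) *m y = 0) &
      (forall x y, inU q M u x -> inV q M v y -> x *m M 0%N ^+ r *m y = 0)].
Proof.
move=> q_ge2 M0v f_def; rewrite (quasiadditiveP r q_ge2 M0v f_def).
have cond2 (x : 'rV[K]_d) : x *m (M 0%N ^+ r - 1%:M) *m v = 0.
  by rewrite -mulmxA mulmxBl exprM0_fix // mul1mx subrr mulmx0.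
split=> [[uv0 /(word_additiveP q r M0v uv0) wadd] | [uv0 _ cond3 cond4]].
- have gen3 w2 : qword q w2 ->
      u *m (M 0%N ^+ r - 1%:M) *m (wprod M w2 *m v - v) = 0.
    by move=> qw2; have := wadd [::] w2 isT qw2; rewrite mulmx1 subrr !mul0mx addr0.
  have cond3 y : inV q M v y -> u *m (M 0%N ^+ r - 1%:M) *m y = 0.
    exact: inV_annihilated.
  split=> // x y ux vy; apply: inV_annihilated vy => w2 qw2.
  rewrite -mulmxA; apply: inU_annihilated ux => w1 qw1.
  by have := wadd w1 w2 qw1 qw2; rewrite gen3 // add0r mulmxA.
- split=> //; apply/(word_additiveP q r M0v uv0) => w1 w2 qw1 qw2.
  have ux : inU q M u (u *m wprod M w1 - u) by exact: inU_generator.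
  have vy : inV q M v (wprod M w2 *m v - v) by exact: inV_generator.
  by rewrite cond3 // cond4 // addr0.
Qed.
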